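(* For every integer $b\ge2$, digit $d\in\{0,\dots,b-1\}$ and $k\ge0$, $$H^{(k)}=\int_{[b^{-1},1)}\frac{d\mu_k(x)}{x}.$$
   Context: For an integer $n\ge0$, $k(n)$ denotes the number of occurrences of the digit $d$ in the base-$b$ representation of $n$ without leading zeros, and $H^{(k)}=\sum_{n\ge1,\ k(n)=k}1/n$. A string is a finite sequence $X=(d_l,\dots,d_1)$ of digits in $\{0,\dots,b-1\}$ (leading zeros allowed), of length $|X|=l\ge0$ (the empty string has length $0$); its value is $n(X)=\sum_{i=1}^{l}d_ib^{i-1}$ ($n(\emptyset)=0$). For $k\ge0$, $\mu_k$ is the discrete measure on $[0,1)$ defined by $\mu_k=\sum_{X}b^{-|X|}\delta_{n(X)/b^{|X|}}$, the sum running over all strings $X$ containing the digit $d$ exactly $k$ times (masses at the same point add). It has total mass $b$. *)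

From HB Require Import structures.
From mathcomp Require Import all_boot all_order all_algebra.
From mathcomp Require Import all_classical all_reals all_analysis.
Set Implicit Arguments. Unset Strict Implicit. Unset Printing Implicit Defensive.
Import Order.TTheory GRing.Theory Num.Theory.
Local Open Scope ring_scope.

(* k(n): number of occurrences of digit d in the base-b representation of n
   (no leading zeros).  For n >= 1 the digit positions are exactly the i with
   b^i <= n, and any such i satisfies i < n (as b >= 2). For n = 0 the
   representation is empty, so the count is 0. *)
Definition digcount (b d n : nat) : nat :=
  count (fun i => (b ^ i <= n)%N && ((n %/ b ^ i) %% b == d)%N) (iota 0 n).

Definition Hk (R : realType) (b d k : nat) : \bar R :=
  (\sum_(1 <= n <oo | digcount b d n == k) (n%:R^-1)%:E)%E.

(* A string X = (d_l, ..., d_1) is a seq 'I_b listed from the most significant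
   digit d_l to d_1; its length is size X. *)
Definition strval (b : nat) (X : seq 'I_b) : nat :=
  foldl (fun acc (c : 'I_b) => (acc * b + c)%N) 0%N X.

Definition strpt (R : realType) (b : nat) (X : seq 'I_b) : R :=
  (strval X)%:R / (b%:R ^+ size X).

Definition wt (R : realType) (b : nat) (d : 'I_b) (k : nat) (n : nat) : R :=
  match (pickle_inv n : option (seq 'I_b)) with
  | Some X => if count (pred1 d) X == k then (b%:R ^- size X) else 0
  | None => 0
  end.

Lemma wt_ge0 (R : realType) (b : nat) (d : 'I_b) (k n : nat) : 0 <= wt R d k n.
Proof.
rewrite /wt; case: (pickle_inv n) => [X|] //.
by case: ifP => // _; rewrite invr_ge0 exprn_ge0 // ler0n.
Qed.

Definition wtnng (R : realType) (b : nat) (d : 'I_b) (k n : nat) : {nonneg R} :=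
  NngNum (wt_ge0 R d k n).

Definition ptn (R : realType) (b : nat) (n : nat) : R :=
  match (pickle_inv n : option (seq 'I_b)) with
  | Some X => strpt R X
  | None => 0
  end.

(* mu_k = sum over all strings X with exactly k occurrences of d of
   b^{-|X|} * delta_{n(X)/b^|X|}  (strings with other counts get weight 0) *)
Definition muk (R : realType) (b : nat) (d : 'I_b) (k : nat)
  : {measure set R -> \bar R} :=
  mseries (fun n => mscale (wtnng R d k n) (@dirac _ R (ptn R b n) R)) 0.

From HB Require Import structures.
From mathcomp Require Import all_boot all_order all_algebra.
From mathcomp Require Import all_classical all_reals all_analysis.
From mathcomp Require Import measurable_realfun zify.
Import Order.TTheory GRing.Theory Num.Theory.

Set Implicit Arguments.
Unset Strict Implicit.
Unset Printing Implicit Defensive.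

(* The strings X whose point n(X)/b^|X| lies in [1/b, 1) are exactly those
   without a leading zero, i.e. the base-b representations of the integers
   n >= 1, and on them the number of digits d in X is k(n(X)).  Such an atom
   carries mass b^-|X| and the integrand equals b^|X|/n(X) there, so it
   contributes 1/n(X): the integral is the sum of 1/n over n >= 1 with
   k(n) = k. *)

Lemma count_iota_trunc (P : pred nat) (B N : nat) :
  (forall i, (B <= i)%N -> ~~ P i) -> (B <= N)%N ->
  count P (iota 0 N) = count P (iota 0 B).
Proof.
move=> PB BN; rewrite -(subnKC BN) iotaD count_cat add0n.
rewrite (_ : count P (iota B (N - B)) = 0%N) ?addn0 //.
apply/eqP; rewrite -leqn0 leqNgt -has_count; apply/hasPn => i.
by rewrite mem_iota => /andP[/PB].
Qed.

Section Strings.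
Variables (b : nat) (b_gt1 : (1 < b)%N).

Let b_gt0 : (0 < b)%N. Proof. exact: ltnW. Qed.

Lemma strval_rcons (X : seq 'I_b) (c : 'I_b) :
  strval (rcons X c) = (strval X * b + c)%N.
Proof. by rewrite /strval -cats1 foldl_cat. Qed.

Lemma strval_ltn (X : seq 'I_b) : (strval X < b ^ size X)%N.
Proof.
elim/last_ind: X => [|X c IH] //; rewrite strval_rcons size_rcons expnS.
by have := ltn_ord c; move: IH; move: (strval X) (b ^ size X) => v p; nia.
Qed.

Lemma strval_inj_size (X Y : seq 'I_b) :
  size X = size Y -> strval X = strval Y -> X = Y.
Proof.
elim/last_ind: X Y => [|X c IH] Y; first by case: Y.
case/lastP: Y => [|Y c']; first by rewrite size_rcons.
rewrite !size_rcons !strval_rcons => -[sXY] vXY.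
have cc' : nat_of_ord c = c'.
  by have := congr1 (modn^~ b) vXY; rewrite !modnMDl !modn_small.
have := congr1 (divn^~ b) vXY; rewrite !divnMDl // !divn_small // !addn0.
by move=> /(IH _ sXY) ->; rewrite (ord_inj cc').
Qed.

(* [X] has no leading zero, stated as b^(|X|-1) <= n(X). *)
Definition no_lead0 (X : seq 'I_b) := (b ^ size X <= strval X * b)%N.

Lemma no_lead0_gt0 (X : seq 'I_b) : no_lead0 X -> (0 < strval X)%N.
Proof.
rewrite /no_lead0 lt0n; apply: contraTneq => ->.
by rewrite mul0n -ltnNge expn_gt0 b_gt0.
Qed.

Lemma no_lead0_rcons (X : seq 'I_b) (c : 'I_b) :
  X != [::] -> no_lead0 (rcons X c) -> no_lead0 X.
Proof.
rewrite /no_lead0 size_rcons strval_rcons expnS [(_ + c) * b]mulnC leq_pmul2l //.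
case: X => // a X _ /=; rewrite expnS [strval _ * b]mulnC.
have := ltn_ord c; move: (strval (a :: X)) (b ^ size X) => v p cb pv.
rewrite leq_pmul2l // leqNgt; apply/negP => vp.
have : (b * v.+1 <= b * p)%N by rewrite leq_pmul2l.
nia.
Qed.

Lemma no_lead0_inj (X Y : seq 'I_b) :
  no_lead0 X -> no_lead0 Y -> strval X = strval Y -> X = Y.
Proof.
have le_size (X' Y' : seq 'I_b) :
    no_lead0 X' -> strval X' = strval Y' -> (size X' <= size Y')%N.
  rewrite /no_lead0 => nX' vXY; rewrite leqNgt; apply/negP => ltYX.
  have := strval_ltn Y'; move: nX'; rewrite vXY.
  have : (b ^ (size Y').+1 <= b ^ size X')%N by rewrite leq_exp2l.
  by rewrite expnS; move: (b ^ size X') (b ^ size Y') => p q; nia.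
move=> nX nY vXY; apply: strval_inj_size => //.
by apply/eqP; rewrite eqn_leq le_size // le_size.
Qed.

Lemma no_lead0_strval_onto (m : nat) :
  (0 < m)%N -> exists2 X, no_lead0 X & strval X = m.
Proof.
elim/ltn_ind: m => m IH m_gt0; case: (ltnP m b) => [mb|bm].
  by exists [:: Ordinal mb]; rewrite /no_lead0 /strval //= expn1 leq_pmull.
have q_gt0 : (0 < m %/ b)%N by rewrite divn_gt0.
have [X nX vX] := IH _ (ltn_Pdiv b_gt1 m_gt0) q_gt0.
exists (rcons X (Ordinal (ltn_pmod m b_gt0))).
  rewrite /no_lead0 size_rcons strval_rcons vX /= -divn_eq expnS [m * b]mulnC.
  by rewrite leq_pmul2l //; apply: leq_trans nX _; rewrite vX leq_divM.
by rewrite strval_rcons vX /= -divn_eq.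
Qed.

Variable d : 'I_b.

Let dig (n i : nat) := (b ^ i <= n)%N && ((n %/ b ^ i) %% b == d)%N.

Lemma digcount_iota (n L : nat) : (n < b ^ L)%N ->
  digcount b d n = count (dig n) (iota 0 L).
Proof.
move=> nL; have dig_out i : (minn n L <= i)%N -> ~~ dig n i.
  rewrite geq_min /dig => /orP[ni|Li]; apply/nandP; left; rewrite -ltnNge.
    by apply: leq_trans (ltn_expl i b_gt1); rewrite ltnS.
  by apply: leq_trans nL _; rewrite leq_exp2l.
rewrite /digcount -/(dig n) (count_iota_trunc dig_out (geq_minl n L)).
by rewrite (count_iota_trunc dig_out (geq_minr n L)).
Qed.

Lemma digcount_mulnD (v : nat) (c : 'I_b) : (0 < v * b + c)%N ->
  digcount b d (v * b + c) = ((c == d) + digcount b d v)%N.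
Proof.
move=> n_gt0; have vb : (v < b ^ v)%N by apply: ltn_expl.
have nb : (v * b + c < b ^ v.+1)%N.
  by rewrite expnS; have := ltn_ord c; move: vb; move: (b ^ v) => p; nia.
rewrite (digcount_iota nb) (digcount_iota vb) /=; congr addn.
  by rewrite /dig expn0 divn1 n_gt0 /= modnMDl modn_small.
rewrite -[1%N]/(1 + 0)%N iotaDl count_map; apply: eq_count => i /=.
rewrite /dig add1n expnS divnMA divnMDl // (divn_small (ltn_ord c)) addn0.
congr andb; have := ltn_ord c; move: (b ^ i) => p cb.
by apply/idP/idP => h; nia.
Qed.

Lemma digcount_strval (X : seq 'I_b) :
  no_lead0 X -> digcount b d (strval X) = count (pred1 d) X.
Proof.
elim/last_ind: X => [|X c IH] nXc; first by rewrite /no_lead0 /= expn0 in nXc.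
have := no_lead0_gt0 nXc; rewrite strval_rcons => n_gt0.
rewrite digcount_mulnD // -cats1 count_cat /= addn0 addnC; congr addn.
have [->|X0] := eqVneq X [::]; first by [].
exact/IH/(no_lead0_rcons X0 nXc).
Qed.

End Strings.

Local Open Scope classical_set_scope.
Local Open Scope ring_scope.

Lemma in_set_predE (T : Type) (P : pred T) (x : T) :
  (x \in [set y | P y]) = P x.
Proof. by apply/idP/idP => [/set_mem|/mem_set]. Qed.

Lemma esum_pickle_inv (R : realType) (T : countType) (a : T -> \bar R) :
  \esum_(n in [set: nat]) oapp a 0%E (pickle_inv n) = \esum_(x in [set: T]) a x.
Proof.
transitivity (\esum_(x in [set: T]) oapp a 0%E (pickle_inv (pickle x)));
  last by apply: eq_esum => x _; rewrite pickleK_inv.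
rewrite -(esum_image _ pickle (fun n => oapp a 0%E (pickle_inv n))); last first.
  by move=> x y _ _; exact: (pcan_inj pickleK_inv).
rewrite [RHS]esum_mkcond; apply: eq_esum => n _; case: ifPn => // /negP nT.
case E: (pickle_inv n) => [x|] //; case: nT; rewrite inE; exists x => //.
by have /= := @pickle_invK T n; rewrite E.
Qed.

Section Integral.
Variables (R : realType) (b : nat) (d : 'I_b) (k : nat).

Lemma integral_muk (D : set R) (f : R -> \bar R) :
  measurable D -> measurable_fun D f -> (forall x, D x -> (0 <= f x)%E) ->
  (\int[muk R d k]_(x in D) f x =
   \esum_(X in [set X | count (pred1 d) X == k])
     (b%:R ^- size X)%:E * (\d_(strpt R X) D * f (strpt R X)))%E.
Proof.
move=> mD mf f0; have diracf_ge0 a : (0 <= \d_a D * f a)%E.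
  rewrite diracE; case: (boolP (a \in D)) => [/set_mem/f0|_].
    by rewrite mul1e.
  by rewrite mul0e.
rewrite /muk ge0_integral_measure_series //.
under eq_eseriesr => n _ do rewrite ge0_integral_mscale // integral_dirac //.
rewrite nneseries_esumT; last by move=> n; rewrite mule_ge0 ?lee_fin ?wt_ge0.
rewrite [RHS]esum_mkcond -[RHS]esum_pickle_inv; apply: eq_esum => n _ /=.
rewrite /wt /ptn; case: (pickle_inv n) => [X|] /=; last by rewrite mul0e.
by rewrite in_set_predE; case: (count _ X == k); rewrite ?mul0e.
Qed.

Hypothesis b_gt1 : (1 < b)%N.

Let I : set R := `[(b%:R^-1 : R), 1[.

Let bR_gt0 : (0 < b%:R :> R). Proof. by rewrite ltr0n ltnW. Qed.

Let canon_k := [set X | count (pred1 d) X == k] `&` [set X | no_lead0 X].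

Lemma mem_strpt_itv (X : seq 'I_b) : (strpt R X \in I) = no_lead0 X.
Proof.
have bX_gt0 : (0 < b%:R ^+ size X :> R) by rewrite exprn_gt0.
rewrite /I /strpt mem_setE in_itv /= ler_pdivlMr // ltr_pdivrMr // mul1r.
rewrite [_^-1 * _]mulrC ler_pdivrMr // -!natrX -natrM ler_nat ltr_nat.
by rewrite (strval_ltn b_gt1) andbT.
Qed.

Lemma integral_muk_inv :
  (\int[muk R d k]_(x in I) (x^-1)%:E =
   \esum_(X in canon_k) ((strval X)%:R^-1)%:E)%E.
Proof.
have I_pos : I `<=` `]0, +oo[.
  move=> x; rewrite /I /= !in_itv /= andbT => /andP[+ _]; apply: lt_le_trans.
  by rewrite invr_gt0.
rewrite integral_muk //; first last.
- by move=> x /I_pos; rewrite /= in_itv /= andbT lee_fin invr_ge0 => /ltW.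
- change (measurable_fun I (EFin \o (@GRing.inv R))); apply/measurable_EFinP.
  apply: (measurable_funS (measurable_itv _) I_pos).
  apply: open_continuous_measurable_fun; first exact: interval_open.
  move=> x; rewrite inE /= in_itv /= andbT => x_gt0.
  by apply: inv_continuous; rewrite gt_eqF.
- exact: measurable_itv.
rewrite esum_mkcondr; apply: eq_esum => X _.
rewrite diracE mem_strpt_itv in_set_predE.
case: (no_lead0 X); last by rewrite mul0e mule0.
rewrite mul1e -EFinM /strpt invf_div mulrA mulVf ?mul1r //.
by rewrite expf_neq0 // pnatr_eq0 -lt0n ltnW.
Qed.

Lemma Hk_esum_strings :
  Hk R b d k = \esum_(X in canon_k) ((strval X)%:R^-1)%:E.
Proof.
rewrite /Hk eseries_cond nneseries_esum; last first.
  by move=> n _; rewrite lee_fin invr_ge0.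
rewrite -(esum_image _ (@strval b) (fun n : nat => ((n%:R : R)^-1)%:E));
  last by move=> X Y /set_mem[_ nX] /set_mem[_ nY]; apply: no_lead0_inj.
congr esum; apply/seteqP; split=> [n /= /andP[/eqP nk n_gt0] | _ [X [dX nX] <-]].
  have [X nX vX] := no_lead0_strval_onto b_gt1 n_gt0.
  by exists X => //; split => //; rewrite /= -(digcount_strval b_gt1 d nX) vX nk.
by rewrite /= (digcount_strval b_gt1) // (no_lead0_gt0 b_gt1) // andbT.
Qed.

End Integral.

Theorem mainTheorem5 (R : realType) (b : nat) (hb : (2 <= b)%N) (d : 'I_b) (k : nat) :
  Hk R b d k = (\int[muk R d k]_(x in `[(b%:R^-1 : R)%R, 1%R[) (x^-1)%:E)%E.
Proof. by rewrite (Hk_esum_strings R d k hb) (integral_muk_inv R d k hb). Qed.
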